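(* Let $ABC$ be a nondegenerate triangle whose circumcenter $O$ does not lie on any of the lines $BC$, $CA$, $AB$ (i.e. $ABC$ is not right-angled). If $XYZ$ is a Miquel triangle of $P=O$ relative to $ABC$, then $O$ is the orthocenter of triangle $XYZ$.
   Context: Miquel triangle: given a triangle $ABC$ and a point $P$ not on the lines $BC,CA,AB$, a triangle $XYZ$ with $X$ on line $BC$, $Y$ on line $CA$, $Z$ on line $AB$ is called a Miquel triangle of $P$ relative to $ABC$ if $P$ lies on each of the three circles through $A,Y,Z$, through $B,Z,X$, and through $C,X,Y$. *)

From HB Require Import structures.
From mathcomp Require Import all_boot all_order all_algebra.
Set Implicit Arguments. Unset Strict Implicit. Unset Printing Implicit Defensive.
Import Order.TTheory GRing.Theory Num.Theory.
Local Open Scope ring_scope.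

Definition point (R : realFieldType) := (R * R)%type.

Definition dist2 (R : realFieldType) (P Q : point R) : R :=
  (P.1 - Q.1) ^+ 2 + (P.2 - Q.2) ^+ 2.

Definition collinear (R : realFieldType) (P Q S : point R) : Prop :=
  (Q.1 - P.1) * (S.2 - P.2) - (Q.2 - P.2) * (S.1 - P.1) = 0.

Definition on_line (R : realFieldType) (P Q X : point R) : Prop :=
  P <> Q /\ collinear P Q X.

Definition dotv (R : realFieldType) (P1 P2 Q1 Q2 : point R) : R :=
  (P1.1 - P2.1) * (Q1.1 - Q2.1) + (P1.2 - P2.2) * (Q1.2 - Q2.2).

Definition circumcenter (R : realFieldType) (A B C O : point R) : Prop :=
  dist2 O A = dist2 O B /\ dist2 O A = dist2 O C.

(* P lies on THE circle through U, V, W (which exists and is unique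
   exactly when U, V, W are not collinear) *)
Definition on_circle3 (R : realFieldType) (U V W P : point R) : Prop :=
  ~ collinear U V W /\
  exists c : point R,
    [/\ dist2 c U = dist2 c V, dist2 c U = dist2 c W & dist2 c U = dist2 c P].

Definition miquel_triangle (R : realFieldType) (A B C P X Y Z : point R) : Prop :=
  (on_line B C X /\ on_line C A Y /\ on_line A B Z) /\
  (on_circle3 A Y Z P /\ on_circle3 B Z X P /\ on_circle3 C X Y P).

Definition orthocenter (R : realFieldType) (X Y Z H : point R) : Prop :=
  [/\ ~ collinear X Y Z,
      dotv H X Y Z = 0, dotv H Y Z X = 0 & dotv H Z X Y = 0].

(* Since O is the circumcenter, the feet of the perpendiculars from O to the
   sides are the midpoints of the sides.  The Miquel circles through O force the
   lines OX, OY, OZ to make the same directed angle with BC, CA, AB (inscribed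
   angles subtending the chords OC, OA, OB), so with k the common cotangent of
   that angle, X, Y, Z are the images of the midpoints under the spiral
   similarity z |-> O + (1 + k i)(z - O).  O is the orthocenter of the medial
   triangle, whose altitudes are the perpendicular bisectors of ABC, and a
   spiral similarity centred at O preserves this. *)
From HB Require Import structures.
From mathcomp Require Import all_boot all_order all_algebra.
From mathcomp Require Import ring.
Set Implicit Arguments.
Unset Strict Implicit.
Import Order.TTheory GRing.Theory Num.Theory.
Local Open Scope ring_scope.

Section MiquelCircumcenter.
Variable R : realFieldType.

Definition crossv (P1 P2 Q1 Q2 : point R) : R :=
  (P1.1 - P2.1) * (Q1.2 - Q2.2) - (P1.2 - P2.2) * (Q1.1 - Q2.1).

(* In complex notation, O + (1 + k i)(M - O) with M the midpoint of BC. *)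
Definition spiral_midpoint (k : R) (O B C : point R) : point R :=
  (O.1 + ((B.1 - O.1) + (C.1 - O.1)) / 2 - k * ((B.2 - O.2) + (C.2 - O.2)) / 2,
   O.2 + ((B.2 - O.2) + (C.2 - O.2)) / 2 + k * ((B.1 - O.1) + (C.1 - O.1)) / 2).

Lemma dist2_neq0 (P Q : point R) : P <> Q -> dist2 P Q != 0.
Proof.
case: P Q => [p1 p2] [q1 q2] hne; apply/negP.
rewrite /dist2 /= paddr_eq0 ?sqr_ge0 // !sqrf_eq0 !subr_eq0.
by case/andP => /eqP e1 /eqP e2; apply: hne; rewrite e1 e2.
Qed.

Lemma not_collinear_neq (A B O : point R) : ~ collinear A B O -> A <> O.
Proof. by move=> hcol eAO; apply: hcol; rewrite eAO /collinear; ring. Qed.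

Lemma on_lineP (B C X : point R) : on_line B C X ->
  exists t, X = (B.1 + t * (C.1 - B.1), B.2 + t * (C.2 - B.2)).
Proof.
case: B C X => [b1 b2] [c1 c2] [x1 x2] [hne hcol]; rewrite /collinear /= in hcol.
have hCB : (c1 - b1) ^+ 2 + (c2 - b2) ^+ 2 != 0.
  exact: dist2_neq0 (nesym hne).
exists (((x1 - b1) * (c1 - b1) + (x2 - b2) * (c2 - b2)) /
        ((c1 - b1) ^+ 2 + (c2 - b2) ^+ 2)) => /=.
congr pair; apply/eqP; rewrite -subr_eq0; apply/eqP.
- rewrite [LHS](_ : _ = - (c2 - b2) * ((c1 - b1) * (x2 - b2) - (c2 - b2) * (x1 - b1))
                      / ((c1 - b1) ^+ 2 + (c2 - b2) ^+ 2)); last by field.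
  by rewrite hcol mulr0 mul0r.
- rewrite [LHS](_ : _ = (c1 - b1) * ((c1 - b1) * (x2 - b2) - (c2 - b2) * (x1 - b1))
                      / ((c1 - b1) ^+ 2 + (c2 - b2) ^+ 2)); last by field.
  by rewrite hcol mulr0 mul0r.
Qed.

Lemma on_line_crossv_neq0 (B C O X : point R) :
  on_line B C X -> ~ collinear B C O -> crossv X O C B != 0.
Proof.
move=> /on_lineP [t ->] hBCO; apply/negP => /eqP hX; apply: hBCO.
by rewrite /collinear -hX /crossv /=; ring.
Qed.

(* The ratio dotv/crossv is the cotangent of the inscribed angle at Y, resp. Z,
   subtending the chord OA; equality of these angles is the concyclicity. *)
Lemma on_circle3_cot (A Y Z O : point R) : A <> O -> on_circle3 A Y Z O ->
  crossv Y O A Y * dotv Z O A Z = crossv Z O A Z * dotv Y O A Y.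
Proof.
case: A O => [a1 a2] [o1 o2] hne [_ [c [eAY eAZ eAO]]].
have hOA := dist2_neq0 (nesym hne).
apply/eqP; rewrite -subr_eq0; apply/eqP; apply: (mulfI hOA); rewrite mulr0.
set cy := (Y.1 - o1) * (a2 - o2) - (Y.2 - o2) * (a1 - o1).
set cz := (Z.1 - o1) * (a2 - o2) - (Z.2 - o2) * (a1 - o1).
set dy := (a1 - o1) * (Y.1 - o1) + (a2 - o2) * (Y.2 - o2).
set dz := (a1 - o1) * (Z.1 - o1) + (a2 - o2) * (Z.2 - o2).
have -> : dist2 (o1, o2) (a1, a2) *
    (crossv Y (o1, o2) (a1, a2) Y * dotv Z (o1, o2) (a1, a2) Z -
     crossv Z (o1, o2) (a1, a2) Z * dotv Y (o1, o2) (a1, a2) Y)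
  = (dist2 c (a1, a2) - dist2 c (o1, o2)) * (cy * dz - cz * dy)
    - dist2 (o1, o2) (a1, a2) * (cy * (dist2 c Z - dist2 c (o1, o2))
                                 - cz * (dist2 c Y - dist2 c (o1, o2))).
  by rewrite /cy /cz /dy /dz /crossv /dotv /dist2 /=; ring.
by rewrite -eAY -eAZ eAO !subrr; ring.
Qed.

(* The inscribed angles of [on_circle3_cot] at P and Q are, up to a straight
   angle, the angles between OP and UV and between OQ and VW. *)
Lemma miquel_cot (U V W O P Q : point R) : V <> O ->
  on_line U V P -> on_line V W Q -> on_circle3 V P Q O ->
  crossv P O V U * dotv Q O W V = crossv Q O W V * dotv P O V U.
Proof.
move=> hVO /on_lineP [t eP] /on_lineP [s eQ] hcirc.
have := on_circle3_cot hVO hcirc; case: hcirc => hPQ _.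
have ht : 1 - t != 0.
  apply/negP; rewrite subr_eq0 => /eqP ht; apply: hPQ.
  by rewrite eP eQ -ht /collinear /=; ring.
have hs : - s != 0.
  apply/negP; rewrite oppr_eq0 => /eqP hs; apply: hPQ.
  by rewrite eP eQ hs /collinear /=; ring.
rewrite [LHS](_ : _ = ((1 - t) * - s) * (crossv P O V U * dotv Q O W V));
  last by rewrite eP eQ /crossv /dotv /=; ring.
rewrite [RHS](_ : _ = ((1 - t) * - s) * (crossv Q O W V * dotv P O V U));
  last by rewrite eP eQ /crossv /dotv /=; ring.
by apply: mulfI; rewrite mulf_neq0.
Qed.

Lemma on_line_spiral_midpoint (B C O X : point R) (k : R) :
  dist2 O B = dist2 O C -> on_line B C X ->
  dotv X O C B = k * crossv X O C B -> X = spiral_midpoint k O B C.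
Proof.
move=> hOBC hX hk; have [t eX] := on_lineP hX; case: hX => hBC _.
have hCB := dist2_neq0 (nesym hBC).
move/eqP: hk; rewrite -subr_eq0 => /eqP hk.
move/eqP: hOBC; rewrite eq_sym -subr_eq0 => /eqP hOBC.
move: hk hOBC hCB; rewrite {}eX.
case: B C O {hBC} => [b1 b2] [c1 c2] [o1 o2].
set K := (_ - k * _); set D := (_ - _) => hK hD hCB.
rewrite /spiral_midpoint /=; congr pair; apply/eqP; rewrite -subr_eq0; apply/eqP.
- rewrite [LHS](_ : _ = (K * (c1 - b1) - D / 2 * ((c1 - b1) - k * (c2 - b2)))
                        / dist2 (c1, c2) (b1, b2)).
    by rewrite hK hD !mul0r subrr mul0r.
  by move: hCB; rewrite /K /D /dotv /crossv /dist2 /= => hCB; field.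
- rewrite [LHS](_ : _ = (K * (c2 - b2) - D / 2 * ((c2 - b2) + k * (c1 - b1)))
                        / dist2 (c1, c2) (b1, b2)).
    by rewrite hK hD !mul0r subrr mul0r.
  by move: hCB; rewrite /K /D /dotv /crossv /dist2 /= => hCB; field.
Qed.

Lemma spiral_midpoint_orthocenter (k : R) (A B C O : point R) :
  ~ collinear A B C -> circumcenter A B C O ->
  orthocenter (spiral_midpoint k O B C) (spiral_midpoint k O C A)
              (spiral_midpoint k O A B) O.
Proof.
move=> hABC [hOB hOC].
have hk : (1 + k ^+ 2) / 4 != 0.
  rewrite mulf_neq0 ?invr_eq0 ?pnatr_eq0 //.
  by rewrite gt_eqF // ltr_wpDr ?sqr_ge0.
rewrite /orthocenter /collinear /dotv /spiral_midpoint /=; split.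
- move=> hXYZ; apply: hABC; apply: (mulfI hk); rewrite mulr0 -hXYZ /collinear.
  by field.
- rewrite [LHS](_ : _ = (1 + k ^+ 2) / 4 * (dist2 O B - dist2 O C)).
    by rewrite -hOB -hOC subrr mulr0.
  by rewrite /dist2; field.
- rewrite [LHS](_ : _ = (1 + k ^+ 2) / 4 * (dist2 O C - dist2 O A)).
    by rewrite -hOC subrr mulr0.
  by rewrite /dist2; field.
- rewrite [LHS](_ : _ = (1 + k ^+ 2) / 4 * (dist2 O A - dist2 O B)).
    by rewrite -hOB subrr mulr0.
  by rewrite /dist2; field.
Qed.

End MiquelCircumcenter.

Theorem theorem5 (R : realFieldType) (A B C O X Y Z : point R) :
  ~ collinear A B C ->
  circumcenter A B C O ->
  ~ collinear B C O -> ~ collinear C A O -> ~ collinear A B O ->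
  miquel_triangle A B C O X Y Z ->
  orthocenter X Y Z O.
Proof.
move=> hABC hO hBCO hCAO _ [[hX [hY hZ]] [_ [cB cC]]].
have [hOB hOC] := hO.
have hX0 := on_line_crossv_neq0 hX hBCO.
pose k := dotv X O C B / crossv X O C B.
have hkX : dotv X O C B = k * crossv X O C B by rewrite /k divfK.
have hkY : dotv Y O A C = k * crossv Y O A C.
  apply: (mulfI hX0); rewrite (miquel_cot (not_collinear_neq hCAO) hX hY cC) hkX.
  by ring.
have hkZ : dotv Z O B A = k * crossv Z O B A.
  apply: (mulfI hX0); rewrite -(miquel_cot (not_collinear_neq hBCO) hZ hX cB) hkX.
  by ring.
rewrite (on_line_spiral_midpoint (etrans (esym hOB) hOC) hX hkX).
rewrite (on_line_spiral_midpoint (esym hOC) hY hkY).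
rewrite (on_line_spiral_midpoint hOB hZ hkZ).
exact: spiral_midpoint_orthocenter.
Qed.
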